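(* For all rooted trees $u,v$ there exist a vector field $f$ and a quadratic functional $F$ on $Y=\mathbb R^{|u|+|v|}$ such that, for all rooted trees $\tau,\theta$, $F''\bigl(\tau(f)(0),\theta(f)(0)\bigr)\ne0$ if $(\tau,\theta)=(u,v)$ or $(\tau,\theta)=(v,u)$, and $F''\bigl(\tau(f)(0),\theta(f)(0)\bigr)=0$ otherwise.
   Context: Rooted trees: $\bullet$ is the one-vertex tree and $[\tau_1,\ldots,\tau_m]$ is the tree whose root has children that are the roots of subtrees $\tau_1,\ldots,\tau_m$ (unordered); $|\tau|$ is the number of vertices. Elementary differentials of a smooth vector field $f$: $\bullet(f)=f$, $[\tau_1,\ldots,\tau_m](f)=f^{(m)}\bigl(\tau_1(f),\ldots,\tau_m(f)\bigr)$ with $f^{(m)}$ the $m$-th derivative. A quadratic functional is a homogeneous quadratic polynomial $F\colon Y\to\mathbb R$; its Hessian $F''$ is a constant symmetric bilinear form. *)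

From HB Require Import structures.
From mathcomp Require Import all_boot all_order all_algebra.
From mathcomp Require Import all_classical all_reals all_analysis.
From Stdlib Require Permutation.
Set Implicit Arguments. Unset Strict Implicit. Unset Printing Implicit Defensive.
Import Order.TTheory GRing.Theory Num.Theory.
Import numFieldNormedType.Exports.
Local Open Scope ring_scope.

(* Rooted trees: a node with a (list of) children; children are unordered,
   so trees are compared up to isomorphism [tiso] (permutation of children). *)
Inductive tree : Type := Node : seq tree -> tree.

(* bullet = Node [::] ; [t1,...,tm] = Node [:: t1; ...; tm] *)
Definition bullet : tree := Node [::].

Inductive tiso : tree -> tree -> Prop :=
  | tiso_node (ts ss ss' : seq tree) :
      Permutation.Permutation ss ss' -> List.Forall2 tiso ts ss' -> tiso (Node ts) (Node ss).

Fixpoint tree_size (t : tree) : nat :=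
  match t with Node ts => (sumn (map tree_size ts)).+1 end.

Section Diff.
Variables (R : realType) (n : nat).
Local Notation Y := 'rV[R]_n.

(* Iterated directional derivative:
   Dn [:: h1; ...; hm] g x = D_{h1} ( ... (D_{hm} g) ...) x,
   i.e. g^{(m)}(x)(h1,...,hm) for smooth g. *)
Fixpoint Dn {W : normedModType R} (hs : seq Y) (g : Y -> W) : Y -> W :=
  match hs with
  | [::] => g
  | h :: hs' => fun x => derive (Dn hs' g) x h
  end.

Definition smooth (f : Y -> Y) : Prop :=
  forall (hs : seq Y) (x : Y), differentiable (Dn hs f) x.

(* Value at 0 of the elementary differential tau(f):
   [t1,...,tm](f)(0) = f^{(m)}(0)(t1(f)(0), ..., tm(f)(0)). *)
Fixpoint eldiff0 (f : Y -> Y) (t : tree) : Y :=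
  match t with Node ts => Dn (map (eldiff0 f) ts) f 0 end.

Definition quadratic_functional (F : Y -> R) : Prop :=
  exists A : 'M[R]_n, forall y : Y, F y = (y *m A *m y^T) 0 0.

(* Hessian F''(a,b) (constant in the base point for a quadratic F; taken at 0). *)
Definition hessian (F : Y -> R) (a b : Y) : R := Dn [:: a; b] F 0.

End Diff.

From HB Require Import structures.
From mathcomp Require Import all_boot all_order all_algebra.
From mathcomp Require Import all_classical all_reals all_analysis.
From Stdlib Require Import Permutation.
Import Order.TTheory GRing.Theory Num.Theory.
Import numFieldNormedType.Exports.
Set Implicit Arguments. Unset Strict Implicit. Unset Printing Implicit Defensive.

(* Index the coordinates of Y by the vertices of u and v listed in preorder,
   and let f_i(y) be the product of the coordinates y_c over the children c of
   vertex i.  Differentiating a monomial at 0 only leaves the terms in which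
   every direction hits its own factor, so the elementary differentials at 0
   are nonnegative and, by induction on tau, the i-th coordinate of tau(f)(0)
   is nonzero exactly when tau is isomorphic to the subtree rooted at i.  For
   the product F(y) = y_u y_v of the coordinates of the two roots,
   F''(a, b) = a_u b_v + a_v b_u is a sum of nonnegative terms, nonzero exactly
   when (tau, theta) is (u, v) or (v, u) up to isomorphism. *)

Definition tree_ind_nested (P : tree -> Prop)
    (IH : forall ts, (forall t, List.In t ts -> P t) -> P (Node ts)) :
    forall t, P t :=
  fix F t := let: Node ts := t in IH ts
    ((fix G (ts : seq tree) : forall t, List.In t ts -> P t :=
       match ts with
       | [::] => fun t (i : List.In t [::]) => False_ind _ i
       | s :: ts' => fun t i => match i with
                                | or_introl e => eq_ind s P (F s) t e
                                | or_intror i' => G ts' t i' end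
       end) ts).

Definition children (t : tree) : seq tree := let: Node ts := t in ts.

Fixpoint subtrees (t : tree) : seq tree :=
  let: Node ts := t in t :: flatten (map subtrees ts).

Lemma size_subtrees t : size (subtrees t) = tree_size t.
Proof.
elim/tree_ind_nested: t => ts IH /=; congr _.+1; rewrite size_flatten /shape.
elim: ts IH => [|t ts IHts] IH //=.
by rewrite IH ?IHts //; [move=> s Hs; apply: IH; right | left].
Qed.

Lemma tree_size_gt0 t : 0 < tree_size t.
Proof. by case: t. Qed.

Lemma nth_subtrees0 t : nth bullet (subtrees t) 0 = t.
Proof. by case: t. Qed.

Definition preorder_closed (L : seq tree) := forall p, p < size L ->
  exists rest, drop p L = subtrees (nth bullet L p) ++ rest.

Lemma preorder_closed_cat L1 L2 :
  preorder_closed L1 -> preorder_closed L2 -> preorder_closed (L1 ++ L2).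
Proof.
move=> H1 H2 p; rewrite size_cat => Hp.
case: (ltnP p (size L1)) => Hp1.
  have [rest Hr] := H1 p Hp1.
  by exists (rest ++ L2); rewrite drop_cat Hp1 nth_cat Hp1 Hr catA.
have [|rest Hr] := H2 (p - size L1); first by rewrite ltn_subLR.
by exists rest; rewrite drop_cat ltnNge Hp1 nth_cat ltnNge Hp1 /= Hr.
Qed.

Lemma preorder_closed_subtrees t : preorder_closed (subtrees t).
Proof.
elim/tree_ind_nested: t => ts IH [|p] /= Hp; first by exists [::]; rewrite cats0.
suff : preorder_closed (flatten (map subtrees ts)) by apply.
elim: ts IH {Hp} => [|t ts IHts] IH //=.
apply: preorder_closed_cat; first by apply: IH; left.
by apply: IHts => s Hs; apply: IH; right.
Qed.

(* The positions of the roots of [ts] when their preorders are laid out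
   one after the other from position [k]. *)
Fixpoint root_positions (k : nat) (ts : seq tree) : seq nat :=
  if ts is t :: ts' then k :: root_positions (k + tree_size t) ts' else [::].

Lemma root_positionsP L k ts rest : drop k L = flatten (map subtrees ts) ++ rest ->
  map (nth bullet L) (root_positions k ts) = ts /\
  forall c, List.In c (root_positions k ts) -> c < size L.
Proof.
elim: ts k => [|t ts IH] k //= Hd.
have Hk : k < size L by rewrite -subn_gt0 -size_drop Hd; case: t {Hd}.
have Hkt : nth bullet L k = t by rewrite -[k]addn0 -nth_drop Hd; case: t {Hd}.
have [-> IHlt] : map (nth bullet L) (root_positions (k + tree_size t) ts) = ts /\
    forall c, List.In c (root_positions (k + tree_size t) ts) -> c < size L.
  by apply: IH; rewrite addnC -drop_drop Hd -catA -size_subtrees drop_size_cat.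
by split=> [|c [<-|]]; [rewrite Hkt | | exact: IHlt].
Qed.

Definition matches (A B : Type) (P : A -> B -> Prop) (xs : seq A) (ys : seq B) :=
  exists ys', Permutation ys ys' /\ List.Forall2 P xs ys'.

Definition rem_at (T : Type) (k : nat) (s : seq T) := take k s ++ drop k.+1 s.

Section Matching.
Variables (A B A' B' : Type).

Lemma matches_nil (P : A -> B -> Prop) xs : matches P xs [::] <-> xs = [::].
Proof.
split=> [[ys' [/Permutation_nil -> HF]]|->]; first by inversion HF.
by exists [::]; split; constructor.
Qed.

Lemma matches_cons (P : A -> B -> Prop) (x0 : A) xs y ys : matches P xs (y :: ys) <->
  exists k : 'I_(size xs), P (nth x0 xs k) y /\ matches P (rem_at k xs) ys.
Proof.
split.
- move=> [ys' [Hp HF]].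
  have [l1 [l2 Hl]] := List.in_split _ _ (Permutation_in _ Hp (or_introl erefl)).
  rewrite Hl in HF; have [m1 [m2 [H1 [H2 ->]]]] := List.Forall2_app_inv_r _ _ HF.
  inversion H2 as [|x ? m2' ? Hxy H2']; subst.
  have Hk : size m1 < size (m1 ++ x :: m2') by rewrite size_cat /= addnS ltnS leq_addr.
  exists (Ordinal Hk); rewrite /= nth_cat ltnn subnn /rem_at take_size_cat //.
  rewrite drop_cat ltnNge leqnSn subSnn /= drop0; split=> //.
  exists (l1 ++ l2); split; first exact: Permutation_cons_app_inv Hp.
  exact: List.Forall2_app.
- move=> [k [Hxy [ys' [Hp HF]]]].
  have [l1 [l2 [H1 [H2 Hys]]]] := List.Forall2_app_inv_l _ _ HF; rewrite Hys in Hp.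
  exists (l1 ++ y :: l2); split.
    exact: Permutation_trans (perm_skip y Hp) (Permutation_middle _ _ _).
  rewrite -(cat_take_drop k xs) (drop_nth x0 (ltn_ord k)).
  exact/List.Forall2_app/List.Forall2_cons.
Qed.

Lemma Forall2_map_iff (P : A -> B -> Prop) (Q : A' -> B' -> Prop) f g xs ys :
  (forall x y, List.In x xs -> List.In y ys -> P (f x) y <-> Q x (g y)) ->
  List.Forall2 P (map f xs) ys <-> List.Forall2 Q xs (map g ys).
Proof.
elim: xs ys => [|x xs IH] [|y ys] /= HPQ; try by split=> H; inversion H.
have Hxy := HPQ x y (or_introl erefl) (or_introl erefl).
have {}IH := IH ys (fun x' y' Hx Hy => HPQ x' y' (or_intror Hx) (or_intror Hy)).
by split=> /List.Forall2_cons_iff [/Hxy ? /IH ?]; constructor.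
Qed.

Lemma matches_map (P : A -> B -> Prop) (Q : A' -> B' -> Prop) f g xs ys :
  (forall x y, List.In x xs -> List.In y ys -> P (f x) y <-> Q x (g y)) ->
  matches P (map f xs) ys <-> matches Q xs (map g ys).
Proof.
move=> HPQ; have HPQ' ys' : Permutation ys ys' -> forall x y,
    List.In x xs -> List.In y ys' -> P (f x) y <-> Q x (g y).
  move=> Hp x y Hx Hy; apply: HPQ => //.
  exact: Permutation_in (Permutation_sym Hp) Hy.
split.
- move=> [ys' [Hp HF]]; exists (map g ys'); split; first exact: Permutation_map.
  exact/(Forall2_map_iff (HPQ' _ Hp)).
- move=> [zs [Hp HF]].
  have [ys' [Hzs Hp']] := Permutation_map_inv _ _ (Permutation_sym Hp).
  exists ys'; split=> //; apply/(Forall2_map_iff (HPQ' _ Hp')).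
  by rewrite Hzs in HF.
Qed.

End Matching.

Lemma tiso_NodeP ts ss : tiso (Node ts) (Node ss) <-> matches tiso ts ss.
Proof.
split=> [H|[ss' [Hp HF]]]; last exact: tiso_node Hp HF.
by inversion H; exists ss'.
Qed.

Local Open Scope ring_scope.

Section RowFunctions.
Variables (R : realFieldType) (V : normedModType R) (n : nat).

Lemma row_fun_sum (g : 'I_n -> V -> R) :
  (fun x => \row_i g i x) = \sum_(i < n) (fun x => g i x *: (delta_mx 0 i : 'rV_n)).
Proof.
apply: funext => x; rewrite fct_sumE {1}(row_sum_delta (\row_i g i x)).
by apply: eq_bigr => i _; rewrite mxE.
Qed.

Lemma differentiable_row (g : 'I_n -> V -> R) x :
  (forall i, differentiable (g i) x) -> differentiable (fun y => \row_i g i y) x.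
Proof.
move=> Hg; rewrite row_fun_sum; apply: differentiable_sum => i.
exact: differentiableZl.
Qed.

Lemma derive_row (g : 'I_n -> V -> R) x h :
  (forall i, differentiable (g i) x) ->
  'D_h (fun y => \row_i g i y) x = \row_i 'D_h (g i) x.
Proof.
move=> Hg; rewrite derive_mx; last exact/diff_derivable/differentiable_row.
by apply/rowP => j; rewrite !mxE; congr ('D_h _ x); apply: funext => y; rewrite mxE.
Qed.

End RowFunctions.

Section Coordinates.
Variables (R : realFieldType) (n : nat).
Local Notation Y := 'rV[R]_n.

(* Positions of vertices are natural numbers; [coordn c] is junk [0] for [c >= n]. *)
Definition coordn (c : nat) (y : Y) : R := if insub c is Some j then y 0 j else 0.

Lemma coordnE (j : 'I_n) y : coordn j y = y 0 j.
Proof. by rewrite /coordn valK. Qed.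

Lemma coordn0 c : coordn c 0 = 0.
Proof. by rewrite /coordn; case: insub => // j; rewrite mxE. Qed.

Lemma differentiable_coordn c x : differentiable (coordn c) x.
Proof.
rewrite /coordn; case: insub => [j|].
  exact: differentiable_coord.
exact: differentiable_cst.
Qed.

Lemma is_derive_coordn c x h : is_derive x h (coordn c) (coordn c h).
Proof.
apply: DeriveDef; first exact/diff_derivable/differentiable_coordn.
rewrite /coordn; case: insub => [j|]; last exact: derive_cst.
have := derive_mx (@derivable_id _ _ x h); rewrite derive_id => /matrixP/(_ 0 j).
by rewrite mxE.
Qed.

Definition nonneg_row (h : Y) := [forall j, 0 <= h 0 j].

Lemma coordn_ge0 c h : nonneg_row h -> 0 <= coordn c h.
Proof. by move=> /forallP Hh; rewrite /coordn; case: insub. Qed.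

End Coordinates.

Section Monomials.
Variables (R : realType) (n : nat).
Local Notation Y := 'rV[R]_n.

Definition monomial (cs : seq nat) (y : Y) : R := \prod_(c <- cs) coordn c y.

(* Leibniz rule for [y_c * m(y)]: since [y_c] is linear, either no direction
   in [hs] hits it, or exactly one, the [k]-th. *)
Fixpoint dmonomial (cs : seq nat) (hs : seq Y) (x : Y) : R :=
  if cs is c :: cs' then
    coordn c x * dmonomial cs' hs x +
    \sum_(k < size hs) coordn c hs`_k * dmonomial cs' (rem_at k hs) x
  else (hs == [::])%:R.

Lemma dmonomial_nil cs : dmonomial cs [::] = monomial cs.
Proof.
apply: funext => x; rewrite /monomial.
by elim: cs => [|c cs IH] /=; rewrite ?big_nil ?big_cons ?big_ord0 ?addr0 ?IH.
Qed.

Lemma dmonomial_cons c cs hs : dmonomial (c :: cs) hs =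
  coordn c * dmonomial cs hs +
  \sum_(k < size hs) (coordn c hs`_k \*: dmonomial cs (rem_at k hs)).
Proof. by apply: funext => x /=; rewrite fct_sumE. Qed.

Lemma differentiable_dmonomial cs hs x : differentiable (dmonomial cs hs) x.
Proof.
elim: cs hs => [|c cs IH] hs; first exact: differentiable_cst.
rewrite dmonomial_cons; apply: differentiableD.
  exact/differentiableM/IH/differentiable_coordn.
by apply: differentiable_sum => k; exact: differentiableZ.
Qed.

Lemma is_derive_dmonomial cs hs x h :
  is_derive x h (dmonomial cs hs) (dmonomial cs (h :: hs) x).
Proof.
elim: cs hs => [|c cs IH] hs; first exact: is_derive_cst.
rewrite dmonomial_cons.
have Hsum := is_derive_sum
  (fun k : 'I_(size hs) => is_deriveZ (coordn c hs`_k) (IH (rem_at k hs))).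
have Hprod := is_deriveM (is_derive_coordn c x h) (IH hs).
apply: (is_derive_eq (is_deriveD Hprod Hsum)).
rewrite /= big_ord_recl /= /rem_at /= drop0 addrA.
by congr (_ + _ + _); rewrite mulrC.
Qed.

Lemma Dn_monomial cs hs : Dn hs (monomial cs) = dmonomial cs hs.
Proof.
elim: hs => [|h hs IH] /=; first by rewrite dmonomial_nil.
by apply: funext => x; rewrite IH; case: (is_derive_dmonomial cs hs x h).
Qed.

Lemma dmonomial0_cons c cs hs : dmonomial (c :: cs) hs 0 =
  \sum_(k < size hs) coordn c hs`_k * dmonomial cs (rem_at k hs) 0.
Proof. by rewrite /= coordn0 mul0r add0r. Qed.

Lemma all_nonneg_rem_at k hs :
  all (@nonneg_row R n) hs -> all (@nonneg_row R n) (rem_at k hs).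
Proof.
move=> /allP Hhs; apply/allP => h.
by rewrite mem_cat => /orP[/mem_take | /mem_drop]; exact: Hhs.
Qed.

Lemma dmonomial0_ge0 cs hs : all (@nonneg_row R n) hs -> 0 <= dmonomial cs hs 0.
Proof.
elim: cs hs => [|c cs IH] hs Hhs; first exact: ler0n.
rewrite dmonomial0_cons; apply: sumr_ge0 => k _.
apply: mulr_ge0; last exact/IH/all_nonneg_rem_at.
by apply/coordn_ge0/(allP Hhs)/mem_nth.
Qed.

Lemma dmonomial0_neq0P cs hs : all (@nonneg_row R n) hs ->
  dmonomial cs hs 0 != 0 <-> matches (fun h c => coordn c h != 0) hs cs.
Proof.
elim: cs hs => [|c cs IH] hs Hhs.
  by rewrite matches_nil; case: hs {Hhs} => [|h hs] /=; rewrite ?oner_eq0 ?eqxx.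
rewrite dmonomial0_cons psumr_neq0 => [|k _]; last first.
  apply: mulr_ge0; last exact/dmonomial0_ge0/all_nonneg_rem_at.
  by apply/coordn_ge0/(allP Hhs)/mem_nth.
rewrite (matches_cons _ 0); split.
- move=> /hasP [k _ /=]; rewrite lt0r mulf_eq0 negb_or => /andP[/andP[Hc HG] _].
  by exists k; split=> //; apply/IH => //; exact: all_nonneg_rem_at.
- move=> [k [Hc /IH HG]]; apply/hasP; exists k; first exact: mem_index_enum.
  rewrite /= lt0r mulf_neq0 ?HG //=; last exact: all_nonneg_rem_at.
  apply: mulr_ge0; last exact/dmonomial0_ge0/all_nonneg_rem_at.
  by apply/coordn_ge0/(allP Hhs)/mem_nth.
Qed.

End Monomials.

Lemma delta_quadratic_form (R : pzRingType) n (i j : 'I_n) (y : 'rV[R]_n) :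
  (y *m delta_mx i j *m y^T) 0 0 = y 0 i * y 0 j.
Proof.
rewrite !mxE (bigD1 j) //= big1 ?addr0 => [|k Hk]; last first.
  by rewrite !mxE big1 ?mul0r // => l _; rewrite mxE (negbTE Hk) andbF mulr0.
rewrite mxE (bigD1 i) //= big1 ?addr0 => [|l Hl]; last by rewrite mxE (negbTE Hl) mulr0.
by rewrite !mxE !eqxx mulr1.
Qed.

Section Monomial2.
Variables (R : realType) (n : nat) (i j : 'I_n).
Local Notation Y := 'rV[R]_n.

Lemma monomial2E (y : Y) : monomial [:: val i; val j] y = y 0 i * y 0 j.
Proof. by rewrite /monomial !big_cons big_nil mulr1 !coordnE. Qed.

Lemma hessian_monomial2 (a b : Y) :
  hessian (monomial [:: val i; val j]) a b = a 0 i * b 0 j + a 0 j * b 0 i.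
Proof.
rewrite /hessian Dn_monomial dmonomial0_cons !big_ord_recl big_ord0.
by rewrite !dmonomial0_cons !big_ord1 /= !mulr1 addr0 !coordnE [b 0 i * _]mulrC.
Qed.

Lemma hessian_monomial2_neq0 (a b : Y) : nonneg_row a -> nonneg_row b ->
  hessian (monomial [:: val i; val j]) a b != 0 <->
  (a 0 i != 0 /\ b 0 j != 0) \/ (a 0 j != 0 /\ b 0 i != 0).
Proof.
move=> /forallP a_ge0 /forallP b_ge0.
rewrite hessian_monomial2 paddr_eq0 ?mulr_ge0 // negb_and !mulf_eq0 !negb_or.
by split=> [/orP[]/andP|[]/andP ->]; rewrite ?orbT; auto.
Qed.

End Monomial2.

Section TreeField.
Variables (R : realType) (n : nat) (L : seq tree).
Hypotheses (L_preorder : preorder_closed L) (size_L : size L = n).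
Local Notation Y := 'rV[R]_n.

Definition child_positions (i : 'I_n) : seq nat :=
  root_positions i.+1 (children (nth bullet L i)).

Definition tree_field (y : Y) : Y := \row_i monomial (child_positions i) y.

Lemma Dn_tree_field hs :
  Dn hs tree_field = fun x => \row_i dmonomial (child_positions i) hs x.
Proof.
elim: hs => [|h hs IH] /=.
  by apply: funext => y; apply/rowP => i; rewrite !mxE dmonomial_nil.
apply: funext => x; rewrite IH derive_row => [|i]; last exact: differentiable_dmonomial.
apply/rowP => i; rewrite !mxE.
by case: (is_derive_dmonomial (child_positions i) hs x h).
Qed.

Lemma smooth_tree_field : smooth tree_field.
Proof.
move=> hs x; rewrite Dn_tree_field.
by apply: differentiable_row => i; exact: differentiable_dmonomial.
Qed.

Lemma eldiff0_tree_fieldE ts i : eldiff0 tree_field (Node ts) 0 i =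
  dmonomial (child_positions i) (map (eldiff0 tree_field) ts) 0.
Proof. by rewrite /= Dn_tree_field mxE. Qed.

Lemma eldiff0_tree_field_ge0 t : nonneg_row (eldiff0 tree_field t).
Proof.
elim/tree_ind_nested: t => ts IH; apply/forallP => i.
rewrite eldiff0_tree_fieldE; apply: dmonomial0_ge0.
elim: ts IH => //= t ts IHts IH.
by rewrite IH /=; [apply: IHts => s Hs; apply: IH; right | left].
Qed.

Lemma child_positionsP i :
  map (nth bullet L) (child_positions i) = children (nth bullet L i) /\
  forall c, List.In c (child_positions i) -> (c < n)%N.
Proof.
have Hi : (i < size L)%N by rewrite size_L.
have [rest Hrest] := L_preorder Hi.
have [] := @root_positionsP L i.+1 (children (nth bullet L i)) rest.
  by case: (nth bullet L i) Hrest => ts Hrest; rewrite -add1n -drop_drop Hrest /= drop0.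
by rewrite size_L => Hmap Hlt; split.
Qed.

Lemma eldiff0_tree_field_neq0 t (i : 'I_n) :
  eldiff0 tree_field t 0 i != 0 <-> tiso t (nth bullet L i).
Proof.
elim/tree_ind_nested: t i => ts IH i.
have [Hchildren Hlt] := child_positionsP i.
rewrite eldiff0_tree_fieldE dmonomial0_neq0P; last first.
  exact/all_mapT/eldiff0_tree_field_ge0.
rewrite (matches_map (Q := tiso)) => [|t c Ht Hc]; last first.
  by rewrite -[c]/(val (Ordinal (Hlt c Hc))) coordnE; exact: IH.
rewrite Hchildren; case: (nth bullet L i) => ss.
by rewrite tiso_NodeP.
Qed.

End TreeField.

Theorem lemmaA2 (R : realType) (u v : tree) :
  exists (f : 'rV[R]_(tree_size u + tree_size v) -> 'rV[R]_(tree_size u + tree_size v))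
         (F : 'rV[R]_(tree_size u + tree_size v) -> R),
    smooth f /\ quadratic_functional F /\
    forall tau theta : tree,
      (hessian F (eldiff0 f tau) (eldiff0 f theta) != 0 <->
       ((tiso tau u /\ tiso theta v) \/ (tiso tau v /\ tiso theta u))).
Proof.
pose L := subtrees u ++ subtrees v.
have size_L : size L = (tree_size u + tree_size v)%N by rewrite size_cat !size_subtrees.
have L_preorder : preorder_closed L.
  by apply: preorder_closed_cat; apply: preorder_closed_subtrees.
have ltu : (0 < tree_size u + tree_size v)%N by rewrite ltn_addr ?tree_size_gt0.
have ltv : (tree_size u < tree_size u + tree_size v)%N.
  by rewrite -[X in (X < _)%N]addn0 ltn_add2l tree_size_gt0.
pose ru := Ordinal ltu; pose rv := Ordinal ltv.
have Lu : nth bullet L ru = u.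
  by rewrite nth_cat size_subtrees tree_size_gt0 nth_subtrees0.
have Lv : nth bullet L rv = v by rewrite nth_cat size_subtrees ltnn subnn nth_subtrees0.
exists (tree_field L), (monomial [:: val ru; val rv]).
split; first exact: smooth_tree_field.
split; first by exists (delta_mx ru rv) => y; rewrite delta_quadratic_form monomial2E.
move=> tau theta; rewrite hessian_monomial2_neq0 ?eldiff0_tree_field_ge0 //.
by rewrite !(eldiff0_tree_field_neq0 R L_preorder size_L) Lu Lv.
Qed.
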